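(* Assume $\Gamma\vdash t:\tau$ and let $N\in\mathbb{N}$ with $N\ge|\mathrm{FV}(t)|$. If $t\to t'$, then $$\pi(t)(N)+\mathrm{len}(t)>\pi(t')(N)+\mathrm{len}(t').$$ In particular, every reduction sequence $t=t_0\to t_1\to\cdots\to t_k$ starting from $t$ has length $k\le\pi(t)(|\mathrm{FV}(t)|)+\mathrm{len}(t)$.
   Context: Types: $\rho,\tau::=\Diamond\mid\mathbf{B}\mid\tau\multimap\rho\mid\tau\otimes\rho\mid\tau\times\rho\mid\mathbf{L}(\tau)$. Raw terms: $r,s,t::=x^\tau\mid c\mid\lambda x^\tau.\,t\mid\langle t,s\rangle\mid ts\mid\{t\}$, where each variable $x^\tau$ carries a type (infinitely many variables of each type), application associates to the left, terms are identified up to renaming of bound variables ($\lambda$ is the only binder), and the constants $c$ with their types are $\mathsf{tt},\mathsf{ff}:\mathbf{B}$; $\mathsf{nil}_\tau:\mathbf{L}(\tau)$; $\mathsf{cons}_\tau:\Diamond\multimap\tau\multimap\mathbf{L}(\tau)\multimap\mathbf{L}(\tau)$; $\otimes_{\tau,\rho}:\tau\multimap\rho\multimap\tau\otimes\rho$. A context is a finite set of typed variables; $\Gamma_1,\Gamma_2$ denotes $\Gamma_1\cup\Gamma_2$ and presupposes $\Gamma_1\cap\Gamma_2=\emptyset$; $x^\tau$ also denotes $\{x^\tau\}$. The relation $\Gamma\vdash t:\tau$ is inductively defined by: (Var) $\Gamma,x^\tau\vdash x:\tau$; (Const) $\Gamma\vdash c:\tau$ for a constant $c$ of type $\tau$;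 ($\multimap^+$) from $\Gamma\cup\{x^\tau\}\vdash t:\rho$ infer $\Gamma\vdash\lambda x^\tau.t:\tau\multimap\rho$; ($\multimap^-$) from $\Gamma_1\vdash t:\tau\multimap\rho$ and $\Gamma_2\vdash s:\tau$ infer $\Gamma_1,\Gamma_2\vdash ts:\rho$; ($\times^+$) from $\Gamma\vdash t:\tau$ and $\Gamma\vdash s:\rho$ infer $\Gamma\vdash\langle t,s\rangle:\tau\times\rho$; ($\times^-_1$) from $\Gamma\vdash t:\tau\times\rho$ infer $\Gamma\vdash t\,\mathsf{tt}:\tau$; ($\times^-_0$) from $\Gamma\vdash t:\tau\times\rho$ infer $\Gamma\vdash t\,\mathsf{ff}:\rho$; ($\mathbf{B}^-$) from $\Gamma_1\vdash t:\mathbf{B}$, $\Gamma_2\vdash s:\tau$, $\Gamma_2\vdash r:\tau$ infer $\Gamma_1,\Gamma_2\vdash t\langle s,r\rangle:\tau$; ($\otimes^-$) from $\Gamma_1\vdash t:\tau\otimes\rho$ and $\Gamma_2,x^\tau,y^\rho\vdash s:\sigma$ infer $\Gamma_1,\Gamma_2\vdash t(\lambda x^\tau.\lambda y^\rho.s):\sigma$; ($\mathbf{L}^-$) from $\Gamma\vdash t:\mathbf{L}(\tau)$ and $\emptyset\vdash s:\Diamond\multimap\tau\multimap\rho\multimap\rho$ infer $\Gamma\vdash t\{s\}:\rho\multimap\rho$. $\mathrm{FV}(t)$ is the set of free variables of $t$. Lists: a list with $n$ entries ($n\ge0$) is a term $\mathsf{cons}_\tau d_1a_1(\mathsf{cons}_\tau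 d_2a_2(\cdots(\mathsf{cons}_\tau d_na_n\,\mathsf{nil}_\tau)\cdots))$ where the $d_i$ are arbitrary terms of type $\Diamond$ and the $a_i$ arbitrary terms of type $\tau$ (for $n=0$ this is $\mathsf{nil}_\tau$). Conversions $\mapsto$: $(\lambda x.t)s\mapsto t[s/x]$; $\langle t,s\rangle\mathsf{tt}\mapsto t$; $\langle t,s\rangle\mathsf{ff}\mapsto s$; $\mathsf{tt}\langle t,s\rangle\mapsto t$; $\mathsf{ff}\langle t,s\rangle\mapsto s$; $\otimes_{\tau,\rho}ts(\lambda x^\tau.\lambda y^\rho.r)\mapsto r[t,s/x,y]$ (simultaneous substitution); $\mathsf{nil}_\tau\{t\}s\mapsto s$; $\mathsf{cons}_\tau d\,a\,\ell\{t\}s\mapsto t\,d\,a\,(\ell\{t\}s)$ provided $\ell$ is a list. The reduction relation $\to$ is inductively defined by: if $t\mapsto t'$ then $t\to t'$; if $t\to t'$ then $ts\to t's$; if $s\to s'$ then $ts\to ts'$ (no reduction under $\lambda$, inside pairs, or inside braces). Length: $\mathrm{len}(c)=\mathrm{len}(x)=1$; $\mathrm{len}(ts)=\mathrm{len}(t)+\mathrm{len}(s)$; $\mathrm{len}(\lambda x.s)=\mathrm{len}(s)+1$; $\mathrm{len}(\langle t,s\rangle)=\max(\mathrm{len}(t),\mathrm{len}(s))+1$; $\mathrm{len}(\{t\})=0$. $\mathbb{N}^{\mathrm{poly}}$ is the set of functions $\mathbb{N}\to\mathbb{N}$ pointwise bounded by a polynomial; $X$ is the identity, $X_n(m)=\min(n,m)$,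 natural numbers are identified with constant functions, $+,\cdot,\sup$ are pointwise sum, product and maximum. For every raw term $t$ define $\pi(t)\in\mathbb{N}^{\mathrm{poly}}$ by recursion: $\pi(x)=\pi(c)=0$; $\pi(ts)=\pi(t)+X_n\cdot\pi(h)+X_n\cdot\mathrm{len}(h)$ if $t$ is a list with $n$ entries and $s=\{h\}$, and $\pi(ts)=\pi(t)+\pi(s)$ otherwise; $\pi(\lambda x.t)=\pi(t)$; $\pi(\langle t,s\rangle)=\sup(\pi(t),\pi(s))$; $\pi(\{h\})=X\cdot\pi(h)+X\cdot\mathrm{len}(h)$. *)

(* Locally nameless representation of the raw terms:
   bound variables are de Bruijn indices (so alpha-equivalent terms are
   syntactically equal), free variables are named and typed. *)
From Stdlib Require Import Arith List Lia.
Import ListNotations.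

Inductive ty : Type :=
| TDiamond : ty
| TBool : ty
| TLolli : ty -> ty -> ty
| TTensor : ty -> ty -> ty
| TWith : ty -> ty -> ty
| TList : ty -> ty.

Definition ty_eq_dec : forall a b : ty, {a = b} + {a <> b}.
Proof. decide equality. Defined.

Definition var : Type := (nat * ty)%type.

Definition var_eq_dec : forall a b : var, {a = b} + {a <> b}.
Proof. decide equality; [apply ty_eq_dec | apply Nat.eq_dec]. Defined.

Inductive const : Type :=
| CTt : const
| CFf : const
| CNil : ty -> const
| CCons : ty -> const
| CTens : ty -> ty -> const.

Definition const_type (c : const) : ty :=
  match c with
  | CTt => TBool
  | CFf => TBool
  | CNil t => TList t
  | CCons t => TLolli TDiamond (TLolli t (TLolli (TList t) (TList t)))
  | CTens t r => TLolli t (TLolli r (TTensor t r))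
  end.

Inductive term : Type :=
| BVar : nat -> term
| FVar : nat -> ty -> term
| Const : const -> term
| Lam : ty -> term -> term
| Pair : term -> term -> term
| App : term -> term -> term
| Brace : term -> term.

Fixpoint fv (t : term) : list var :=
  match t with
  | BVar _ => []
  | FVar x a => [(x, a)]
  | Const _ => []
  | Lam _ b => fv b
  | Pair a b => fv a ++ fv b
  | App a b => fv a ++ fv b
  | Brace b => fv b
  end.

Definition nfv (t : term) : nat := length (nodup var_eq_dec (fv t)).

Fixpoint open_rec (k : nat) (u : term) (t : term) : term :=
  match t with
  | BVar i => if Nat.eqb i k then u else BVar i
  | FVar _ _ => t
  | Const _ => t
  | Lam a b => Lam a (open_rec (S k) u b)
  | Pair a b => Pair (open_rec k u a) (open_rec k u b)
  | App a b => App (open_rec k u a) (open_rec k u b)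
  | Brace b => Brace (open_rec k u b)
  end.

Definition open (b u : term) : term := open_rec 0 u b.

(* Simultaneous opening of the body r of  lambda x. lambda y. r :
   index k (= y) gets v and index k+1 (= x) gets u, i.e. r[u, v / x, y]. *)
Fixpoint open2_rec (k : nat) (u v : term) (t : term) : term :=
  match t with
  | BVar i => if Nat.eqb i k then v else if Nat.eqb i (S k) then u else BVar i
  | FVar _ _ => t
  | Const _ => t
  | Lam a b => Lam a (open2_rec (S k) u v b)
  | Pair a b => Pair (open2_rec k u v a) (open2_rec k u v b)
  | App a b => App (open2_rec k u v a) (open2_rec k u v b)
  | Brace b => Brace (open2_rec k u v b)
  end.

Definition open2 (r u v : term) : term := open2_rec 0 u v r.

(* Contexts: finite sets of typed variables, represented by lists
   (only membership matters). *)
Definition ctx : Type := list var.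

Definition ctx_union (G G1 G2 : ctx) : Prop :=
  forall v, In v G <-> In v G1 \/ In v G2.

Definition ctx_disjoint (G1 G2 : ctx) : Prop :=
  forall v, In v G1 -> In v G2 -> False.

Inductive typed : ctx -> term -> ty -> Prop :=
| T_Var : forall G x a,
    In (x, a) G -> typed G (FVar x a) a
| T_Const : forall G c,
    typed G (Const c) (const_type c)
| T_Lam : forall G G' a r b x,
    ~ In (x, a) (fv b) ->
    (forall v, In v G' <-> In v G \/ v = (x, a)) ->
    typed G' (open b (FVar x a)) r ->
    typed G (Lam a b) (TLolli a r)
| T_App : forall G G1 G2 t s a r,
    typed G1 t (TLolli a r) -> typed G2 s a ->
    ctx_disjoint G1 G2 -> ctx_union G G1 G2 ->
    typed G (App t s) r
| T_Pair : forall G t s a r,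
    typed G t a -> typed G s r -> typed G (Pair t s) (TWith a r)
| T_Fst : forall G t a r,
    typed G t (TWith a r) -> typed G (App t (Const CTt)) a
| T_Snd : forall G t a r,
    typed G t (TWith a r) -> typed G (App t (Const CFf)) r
| T_If : forall G G1 G2 t s r a,
    typed G1 t TBool -> typed G2 s a -> typed G2 r a ->
    ctx_disjoint G1 G2 -> ctx_union G G1 G2 ->
    typed G (App t (Pair s r)) a
| T_TensE : forall G G1 G2 G2' t s a r sg x y,
    typed G1 t (TTensor a r) ->
    ~ In (x, a) (fv s) -> ~ In (y, r) (fv s) ->
    (* Gamma2, x^a, y^r : disjoint union *)
    ~ In (x, a) G2 -> ~ In (y, r) G2 -> (x, a) <> (y, r) ->
    (forall v, In v G2' <-> In v G2 \/ v = (x, a) \/ v = (y, r)) ->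
    typed G2' (open2 s (FVar x a) (FVar y r)) sg ->
    ctx_disjoint G1 G2 -> ctx_union G G1 G2 ->
    typed G (App t (Lam a (Lam r s))) sg
| T_ListE : forall G t s a r,
    typed G t (TList a) ->
    typed [] s (TLolli TDiamond (TLolli a (TLolli r r))) ->
    typed G (App t (Brace s)) (TLolli r r).

(* Lists: cons_tau d1 a1 (cons_tau d2 a2 (... (cons_tau dn an nil_tau)...)).
   Returns Some (tau, n) iff t is a list with n entries (element type tau). *)
Fixpoint list_entries (t : term) : option (ty * nat) :=
  match t with
  | Const (CNil a) => Some (a, 0)
  | App (App (App (Const (CCons a)) _) _) l =>
      match list_entries l with
      | Some (b, n) => if ty_eq_dec a b then Some (a, S n) else None
      | None => None
      end
  | _ => None
  end.

Definition list_length (t : term) : option nat :=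
  match list_entries t with Some (_, n) => Some n | None => None end.

Inductive conv : term -> term -> Prop :=
| C_Beta : forall a b s, conv (App (Lam a b) s) (open b s)
| C_Fst : forall t s, conv (App (Pair t s) (Const CTt)) t
| C_Snd : forall t s, conv (App (Pair t s) (Const CFf)) s
| C_IfT : forall t s, conv (App (Const CTt) (Pair t s)) t
| C_IfF : forall t s, conv (App (Const CFf) (Pair t s)) s
| C_Tens : forall a r t s b,
    conv (App (App (App (Const (CTens a r)) t) s) (Lam a (Lam r b))) (open2 b t s)
| C_Nil : forall a t s, conv (App (App (Const (CNil a)) (Brace t)) s) s
| C_Cons : forall a d x l t s,
    list_length l <> None ->
    conv (App (App (App (App (App (Const (CCons a)) d) x) l) (Brace t)) s)
         (App (App (App t d) x) (App (App l (Brace t)) s)).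

(* Reduction -> : no reduction under lambda, inside pairs or braces. *)
Inductive red : term -> term -> Prop :=
| R_Conv : forall t t', conv t t' -> red t t'
| R_AppL : forall t t' s, red t t' -> red (App t s) (App t' s)
| R_AppR : forall t s s', red s s' -> red (App t s) (App t s').

Fixpoint len (t : term) : nat :=
  match t with
  | BVar _ => 1
  | FVar _ _ => 1
  | Const _ => 1
  | App a b => len a + len b
  | Lam _ b => len b + 1
  | Pair a b => Nat.max (len a) (len b) + 1
  | Brace _ => 0
  end.

(* pi(t) as a function N -> N, evaluated pointwise at m. *)
Fixpoint pi (t : term) (m : nat) : nat :=
  match t with
  | BVar _ => 0
  | FVar _ _ => 0
  | Const _ => 0
  | App a b =>
      match b with
      | Brace h =>
          match list_length a with
          | Some n => pi a m + Nat.min n m * pi h m + Nat.min n m * len h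
          | None => pi a m + pi b m
          end
      | _ => pi a m + pi b m
      end
  | Lam _ b => pi b m
  | Pair a b => Nat.max (pi a m) (pi b m)
  | Brace h => m * pi h m + m * len h
  end.

From Stdlib Require Import Arith List Lia Bool.
Import ListNotations.

(* Typed terms are affine: each free variable occurs at most once, and none occurs under a
   brace, whose body is closed.  So a beta- or tensor-step substitutes into at most one
   occurrence and [pi + len] decreases.  The only duplicating step,
   [cons d a l {h} s -> h d a (l {h} s)], copies [h]; but [pi] charges [min(n, N)] copies of
   [h] to a list with [n] entries, so the step pays for itself as long as [cons d a l] has at
   most [N] entries.  It does: each entry carries a term of type [TDiamond], which has no
   closed inhabitant and hence contains a free variable, and by affinity these variables
   are pairwise distinct.  Typing (in a context-free, locally nameless form), affinity and
   the free variables are preserved by reduction, which gives the bound on reduction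
   sequences. *)

(** * Occurrence counts *)

(* Braces count twice, so an occurrence bound of [1] forbids variables under braces; pairs
   take the maximum because both components share their context. *)
Fixpoint occ_fv (v : var) (t : term) : nat :=
  match t with
  | BVar _ => 0
  | FVar x a => if var_eq_dec v (x, a) then 1 else 0
  | Const _ => 0
  | Lam _ b => occ_fv v b
  | Pair a b => Nat.max (occ_fv v a) (occ_fv v b)
  | App a b => occ_fv v a + occ_fv v b
  | Brace b => occ_fv v b + occ_fv v b
  end.

Fixpoint occ_bv (k : nat) (t : term) : nat :=
  match t with
  | BVar i => if Nat.eqb i k then 1 else 0
  | FVar _ _ => 0
  | Const _ => 0
  | Lam _ b => occ_bv (S k) b
  | Pair a b => Nat.max (occ_bv k a) (occ_bv k b)
  | App a b => occ_bv k a + occ_bv k b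
  | Brace b => occ_bv k b + occ_bv k b
  end.

Definition affine (t : term) : Prop := forall v, occ_fv v t <= 1.

Definition locally_closed (t : term) : Prop := forall k, occ_bv k t = 0.

Lemma In_fv_occ_fv v t : In v (fv t) <-> 1 <= occ_fv v t.
Proof.
  induction t; simpl; rewrite ?in_app_iff; try (split; [tauto | lia]).
  - destruct (var_eq_dec v (n, t)) as [->|ne]; split; try lia; auto.
    intros [E|[]]; congruence.
  - exact IHt.
  - rewrite IHt1, IHt2; lia.
  - rewrite IHt1, IHt2; lia.
  - rewrite IHt; lia.
Qed.

Lemma affine_App t s : affine (App t s) -> affine t /\ affine s.
Proof. intros H; split; intros v; specialize (H v); simpl in H; lia. Qed.

Lemma open_rec_no_occ t k s : occ_bv k t = 0 -> open_rec k s t = t.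
Proof.
  revert k; induction t; intros k H; simpl in *; auto.
  - destruct (Nat.eqb n k); congruence.
  - now rewrite IHt.
  - rewrite IHt1, IHt2; auto; lia.
  - rewrite IHt1, IHt2; auto; lia.
  - rewrite IHt; auto; lia.
Qed.

Lemma occ_bv_open_rec_neq t k s i :
  locally_closed s -> i <> k -> occ_bv i (open_rec k s t) = occ_bv i t.
Proof.
  revert k i; induction t; intros k i Hs Hik; simpl; auto.
  destruct (Nat.eqb_spec n k) as [->|]; simpl; auto.
  rewrite Hs; destruct (Nat.eqb_spec k i); congruence.
Qed.

Lemma open2_rec_open_rec t k u v :
  locally_closed u -> open2_rec k u v t = open_rec k v (open_rec (S k) u t).
Proof.
  revert k; induction t; intros k Hu; simpl; f_equal; auto.
  destruct (Nat.eqb_spec n k) as [->|].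
  - rewrite (proj2 (Nat.eqb_neq k (S k))) by lia; simpl; now rewrite Nat.eqb_refl.
  - destruct (Nat.eqb_spec n (S k)).
    + now rewrite open_rec_no_occ.
    + simpl; now destruct (Nat.eqb_spec n k).
Qed.

Lemma occ_fv_open_rec_le t k s v :
  occ_fv v (open_rec k s t) <= occ_fv v t + occ_bv k t * occ_fv v s.
Proof.
  revert k; induction t; intros k; simpl; try lia.
  - destruct (Nat.eqb n k); simpl; lia.
  - apply IHt.
  - specialize (IHt1 k); specialize (IHt2 k). nia.
  - specialize (IHt1 k); specialize (IHt2 k). nia.
  - specialize (IHt k). nia.
Qed.

Lemma occ_fv_open_rec_ge t k s v : occ_fv v t <= occ_fv v (open_rec k s t).
Proof.
  revert k; induction t; intros k; simpl; try lia.
  - apply IHt.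
  - specialize (IHt1 k); specialize (IHt2 k); lia.
  - specialize (IHt1 k); specialize (IHt2 k); lia.
  - specialize (IHt k); lia.
Qed.

Lemma occ_fv_open2_rec_ge t k u s v : occ_fv v t <= occ_fv v (open2_rec k u s t).
Proof.
  revert k; induction t; intros k; simpl; try lia.
  - apply IHt.
  - specialize (IHt1 k); specialize (IHt2 k); lia.
  - specialize (IHt1 k); specialize (IHt2 k); lia.
  - specialize (IHt k); lia.
Qed.

Lemma occ_fv_open_rec_fresh t k x a :
  ~ In (x, a) (fv t) -> occ_fv (x, a) (open_rec k (FVar x a) t) = occ_bv k t.
Proof.
  revert k; induction t; intros k H; cbn [open_rec occ_bv occ_fv fv] in *;
    rewrite ?in_app_iff in H.
  - destruct (Nat.eqb n k); cbn [occ_fv]; auto.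
    now destruct (var_eq_dec (x, a) (x, a)).
  - cbn [occ_fv]. destruct (var_eq_dec (x, a) (n, t)) as [E|]; auto.
    exfalso; apply H; now left.
  - reflexivity.
  - auto.
  - rewrite IHt1, IHt2; tauto.
  - rewrite IHt1, IHt2; tauto.
  - rewrite IHt; tauto.
Qed.

Lemma occ_fv_open_rec_other t k s v :
  occ_fv v s = 0 -> occ_fv v (open_rec k s t) = occ_fv v t.
Proof.
  revert k; induction t; intros k H; simpl; auto.
  destruct (Nat.eqb n k); auto.
Qed.

Lemma nfv_le_incl t u : incl (fv t) (fv u) -> nfv t <= nfv u.
Proof.
  intros H. apply NoDup_incl_length; [apply NoDup_nodup|].
  intros w Hw. apply nodup_In in Hw. apply nodup_In; auto.
Qed.

Lemma nfv_lt_incl v t u :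
  In v (fv u) -> ~ In v (fv t) -> incl (fv t) (fv u) -> nfv t < nfv u.
Proof.
  intros Hu Ht H. unfold nfv, lt.
  change (S (length (nodup var_eq_dec (fv t)))) with (length (v :: nodup var_eq_dec (fv t))).
  apply NoDup_incl_length.
  - constructor; [rewrite nodup_In; auto | apply NoDup_nodup].
  - intros w [<-|Hw]; apply nodup_In; auto. apply nodup_In in Hw; auto.
Qed.

Lemma nfv_App t s : nfv t <= nfv (App t s) /\ nfv s <= nfv (App t s).
Proof. split; apply nfv_le_incl; intros v Hv; simpl; apply in_or_app; auto. Qed.

(** * Typing without free-variable contexts *)

(* [D] types the bound variables (de Bruijn indices); free variables are typed by their
   annotation.  Linearity is only required of binders; for free variables it is the
   separate invariant [affine].  Unlike [typed], this judgement is stable under reduction. *)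
Inductive dtyped : list ty -> term -> ty -> Prop :=
| D_BVar : forall D i a, nth_error D i = Some a -> dtyped D (BVar i) a
| D_FVar : forall D x a, dtyped D (FVar x a) a
| D_Const : forall D c, dtyped D (Const c) (const_type c)
| D_Lam : forall D a b r,
    dtyped (a :: D) b r -> occ_bv 0 b <= 1 -> dtyped D (Lam a b) (TLolli a r)
| D_App : forall D t s a r,
    dtyped D t (TLolli a r) -> dtyped D s a -> dtyped D (App t s) r
| D_Pair : forall D t s a r,
    dtyped D t a -> dtyped D s r -> dtyped D (Pair t s) (TWith a r)
| D_Fst : forall D t a r, dtyped D t (TWith a r) -> dtyped D (App t (Const CTt)) a
| D_Snd : forall D t a r, dtyped D t (TWith a r) -> dtyped D (App t (Const CFf)) r
| D_If : forall D t s r a,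
    dtyped D t TBool -> dtyped D s a -> dtyped D r a -> dtyped D (App t (Pair s r)) a
| D_TensE : forall D t s a r sg,
    dtyped D t (TTensor a r) -> dtyped (r :: a :: D) s sg ->
    occ_bv 0 s <= 1 -> occ_bv 1 s <= 1 -> dtyped D (App t (Lam a (Lam r s))) sg
| D_ListE : forall D t s a r,
    dtyped D t (TList a) -> dtyped [] s (TLolli TDiamond (TLolli a (TLolli r r))) ->
    dtyped D (App t (Brace s)) (TLolli r r).

Lemma dtyped_occ_bv_out D t T :
  dtyped D t T -> forall j, length D <= j -> occ_bv j t = 0.
Proof.
  induction 1; intros j Hj; simpl.
  - assert (i < length D) by (apply nth_error_Some; congruence).
    destruct (Nat.eqb_spec i j); lia.
  - reflexivity.
  - reflexivity.
  - apply IHdtyped; simpl; lia.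
  - rewrite IHdtyped1, IHdtyped2; auto.
  - rewrite IHdtyped1, IHdtyped2; auto.
  - rewrite IHdtyped; auto.
  - rewrite IHdtyped; auto.
  - rewrite IHdtyped1, IHdtyped2, IHdtyped3; auto.
  - rewrite IHdtyped1, IHdtyped2; auto; simpl; lia.
  - rewrite IHdtyped1, IHdtyped2; auto; simpl; lia.
Qed.

Lemma dtyped_locally_closed t T : dtyped [] t T -> locally_closed t.
Proof. intros H j; apply (dtyped_occ_bv_out _ _ _ H); simpl; lia. Qed.

Lemma dtyped_weaken D t T : dtyped D t T -> forall D', dtyped (D ++ D') t T.
Proof.
  induction 1; intros D'; try (econstructor; eauto; fail).
  - constructor. rewrite nth_error_app1; auto. apply nth_error_Some; congruence.
  - apply D_TensE; auto. apply (IHdtyped2 D').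
Qed.

Lemma dtyped_open_rec D a b T s :
  dtyped (D ++ [a]) b T -> dtyped [] s a -> dtyped D (open_rec (length D) s b) T.
Proof.
  intros Hb Hs. pose proof (dtyped_locally_closed _ _ Hs) as Hlc.
  remember (D ++ [a]) as D0 eqn:E. revert D E.
  induction Hb; intros D' E; subst; simpl; try (econstructor; eauto; fail).
  - destruct (Nat.lt_trichotomy i (length D')) as [Hl|[->|Hl]].
    + destruct (Nat.eqb_spec i (length D')); [lia|].
      constructor. rewrite nth_error_app1 in H; auto.
    + rewrite Nat.eqb_refl.
      rewrite nth_error_app2, Nat.sub_diag in H by lia. injection H as <-.
      exact (dtyped_weaken _ _ _ Hs D').
    + rewrite nth_error_app2 in H by lia.
      destruct (i - length D') as [|[|]] eqn:?; simpl in H; try discriminate; lia.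
  - constructor.
    + apply (IHHb (a0 :: D')); auto.
    + rewrite occ_bv_open_rec_neq; auto.
  - apply D_TensE; auto.
    + rewrite occ_bv_open_rec_neq; auto.
    + rewrite occ_bv_open_rec_neq; auto.
  - rewrite (open_rec_no_occ s0) by apply (dtyped_locally_closed _ _ Hb2).
    eapply D_ListE; eauto.
Qed.

Lemma dtyped_cons1_inv D a d T :
  dtyped D (App (Const (CCons a)) d) T ->
  T = TLolli a (TLolli (TList a) (TList a)) /\ dtyped D d TDiamond.
Proof.
  intros H; inversion H; subst;
    match goal with H' : dtyped _ (Const _) _ |- _ => inversion H'; subst end; auto.
Qed.

Lemma dtyped_cons2_inv D a d x T :
  dtyped D (App (App (Const (CCons a)) d) x) T ->
  T = TLolli (TList a) (TList a) /\ dtyped D d TDiamond /\ dtyped D x a.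
Proof.
  intros H; inversion H; subst;
    match goal with H' : dtyped _ (App (Const _) _) _ |- _ =>
      apply dtyped_cons1_inv in H' as [E Hd]; inversion E; subst end; auto.
Qed.

Lemma dtyped_cons_inv D a d x l T :
  dtyped D (App (App (App (Const (CCons a)) d) x) l) T ->
  T = TList a /\ dtyped D d TDiamond /\ dtyped D x a /\ dtyped D l (TList a).
Proof.
  intros H; inversion H; subst;
    match goal with H' : dtyped _ (App (App (Const _) _) _) _ |- _ =>
      apply dtyped_cons2_inv in H' as [E [Hd Hx]]; inversion E; subst end; auto.
Qed.

Lemma dtyped_tens1_inv D a r t T :
  dtyped D (App (Const (CTens a r)) t) T -> T = TLolli r (TTensor a r) /\ dtyped D t a.
Proof.
  intros H; inversion H; subst;
    match goal with H' : dtyped _ (Const _) _ |- _ => inversion H'; subst end; auto.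
Qed.

Lemma dtyped_tens_inv D a r t s T :
  dtyped D (App (App (Const (CTens a r)) t) s) T ->
  T = TTensor a r /\ dtyped D t a /\ dtyped D s r.
Proof.
  intros H; inversion H; subst;
    match goal with H' : dtyped _ (App (Const _) _) _ |- _ =>
      apply dtyped_tens1_inv in H' as [E Ht]; inversion E; subst end; auto.
Qed.

Lemma dtyped_iter_inv D x h T :
  dtyped D (App x (Brace h)) T ->
  exists a r, T = TLolli r r /\ dtyped D x (TList a) /\
    dtyped [] h (TLolli TDiamond (TLolli a (TLolli r r))).
Proof.
  intros H; inversion H; subst; eauto.
  match goal with H' : dtyped _ (Brace _) _ |- _ => inversion H' end.
Qed.

Lemma dtyped_iter_app_inv D x h s T :
  dtyped D (App (App x (Brace h)) s) T ->
  exists a, dtyped D x (TList a) /\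
    dtyped [] h (TLolli TDiamond (TLolli a (TLolli T T))) /\ dtyped D s T.
Proof.
  intros H; inversion H; subst;
    match goal with H' : dtyped _ (App _ (Brace _)) _ |- _ =>
      apply dtyped_iter_inv in H' as (? & ? & E & ? & ?); inversion E; subst end; eauto.
Qed.

Lemma dtyped_beta_inv D a b s T :
  dtyped D (App (Lam a b) s) T -> dtyped (a :: D) b T /\ occ_bv 0 b <= 1 /\ dtyped D s a.
Proof.
  intros H; inversion H; subst;
    match goal with H' : dtyped _ (Lam _ _) _ |- _ => inversion H'; subst end; auto.
Qed.

Lemma dtyped_tens_redex_inv D a r t s b T :
  dtyped D (App (App (App (Const (CTens a r)) t) s) (Lam a (Lam r b))) T ->
  dtyped D t a /\ dtyped D s r /\ dtyped (r :: a :: D) b T /\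
  occ_bv 0 b <= 1 /\ occ_bv 1 b <= 1.
Proof.
  intros H; inversion H; subst;
    match goal with H' : dtyped _ (App (App (Const _) _) _) _ |- _ =>
      apply dtyped_tens_inv in H' as [E [Ht Hs]]; inversion E; subst end; auto.
Qed.

Lemma dtyped_App_l D t s T : dtyped D (App t s) T -> exists T', dtyped D t T'.
Proof. intros H; inversion H; subst; eauto. Qed.

Lemma dtyped_App_App_r D t u v T :
  dtyped D (App t (App u v)) T -> exists T', dtyped D (App u v) T'.
Proof. intros H; inversion H; subst; eauto. Qed.

Lemma red_App t t' : red t t' -> exists u v, t = App u v.
Proof. intros H; inversion H as [? ? Hc| |]; subst; eauto; inversion Hc; eauto. Qed.

Lemma open2_locally_closed b t s :
  locally_closed t -> open2 b t s = open_rec 0 s (open_rec 1 t b).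
Proof. apply open2_rec_open_rec. Qed.

Lemma dtyped_red t t' T : red t t' -> dtyped [] t T -> dtyped [] t' T.
Proof.
  intros Hr; revert T; induction Hr as [t t' Hc| |]; intros T HT.
  - destruct Hc as [a b s|t s|t s|t s|t s|a r t s b|a t s|a d x l t s _].
    + apply dtyped_beta_inv in HT as [Hb [_ Hs]].
      exact (dtyped_open_rec [] a b T s Hb Hs).
    + inversion HT; subst;
        match goal with H' : dtyped _ (Pair _ _) _ |- _ => inversion H'; subst end; auto.
    + inversion HT; subst;
        match goal with H' : dtyped _ (Pair _ _) _ |- _ => inversion H'; subst end; auto.
    + inversion HT; subst; auto.
      match goal with H' : dtyped _ (Const _) _ |- _ => inversion H' end.
    + inversion HT; subst; auto.
      match goal with H' : dtyped _ (Const _) _ |- _ => inversion H' end.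
    + apply dtyped_tens_redex_inv in HT as [Ht [Hs [Hb _]]].
      rewrite open2_locally_closed by exact (dtyped_locally_closed _ _ Ht).
      exact (dtyped_open_rec [] r _ T s (dtyped_open_rec [r] a b T t Hb Ht) Hs).
    + apply dtyped_iter_app_inv in HT as [a' [_ [_ Hs]]]; exact Hs.
    + apply dtyped_iter_app_inv in HT as [a' [Hl' [Ht Hs]]].
      apply dtyped_cons_inv in Hl' as [E [Hd [Hx Hl']]]; inversion E; subst.
      eapply D_App; [eapply D_App; [eapply D_App|]|]; eauto.
      eapply D_App; [eapply D_ListE|]; eauto.
  - inversion HT; subst;
      [eapply D_App | eapply D_Fst | eapply D_Snd | eapply D_If | eapply D_TensE
      | eapply D_ListE]; eauto.
  - destruct (red_App _ _ Hr) as [u [v ->]].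
    inversion HT; subst; econstructor; eauto.
Qed.

Lemma occ_fv_red_le t t' T v :
  red t t' -> dtyped [] t T -> affine t -> occ_fv v t' <= occ_fv v t.
Proof.
  intros Hr; revert T; induction Hr as [t t' Hc|t t' s Hr IH|t s s' Hr IH]; intros T HT HA.
  - destruct Hc as [a b s|t s|t s|t s|t s|a r t s b|a t s|a d x l t s _];
      simpl; try lia.
    + apply dtyped_beta_inv in HT as [_ [Hb _]].
      pose proof (occ_fv_open_rec_le b 0 s v). unfold open; nia.
    + apply dtyped_tens_redex_inv in HT as [Ht [_ [_ [Hb0 Hb1]]]].
      rewrite open2_locally_closed by exact (dtyped_locally_closed _ _ Ht).
      pose proof (occ_fv_open_rec_le (open_rec 1 t b) 0 s v) as H.
      pose proof (occ_fv_open_rec_le b 1 t v).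
      rewrite occ_bv_open_rec_neq in H by (exact (dtyped_locally_closed _ _ Ht) || lia).
      nia.
    + specialize (HA v); simpl in HA; lia.
  - destruct (dtyped_App_l _ _ _ _ HT) as [T' HT'].
    specialize (IH T' HT' (proj1 (affine_App _ _ HA))); simpl; lia.
  - destruct (red_App _ _ Hr) as [u [w ->]].
    destruct (dtyped_App_App_r _ _ _ _ _ HT) as [T' HT'].
    specialize (IH T' HT' (proj2 (affine_App _ _ HA))); simpl in *; lia.
Qed.

Lemma affine_red t t' T : red t t' -> dtyped [] t T -> affine t -> affine t'.
Proof.
  intros Hr HT HA v. pose proof (occ_fv_red_le _ _ _ v Hr HT HA). specialize (HA v); lia.
Qed.

Lemma nfv_red_le t t' T : red t t' -> dtyped [] t T -> affine t -> nfv t' <= nfv t.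
Proof.
  intros Hr HT HA. apply nfv_le_incl. intros v Hv.
  rewrite In_fv_occ_fv in *. pose proof (occ_fv_red_le _ _ _ v Hr HT HA); lia.
Qed.

(** * Empty types and lists *)

(* Types without closed inhabitants, starting from [TDiamond], which no constant has. *)
Fixpoint empty_ty (a : ty) : bool :=
  match a with
  | TDiamond => true
  | TBool => false
  | TLolli a r => negb (empty_ty a) && empty_ty r
  | TTensor a r => empty_ty a || empty_ty r
  | TWith a r => empty_ty a || empty_ty r
  | TList _ => false
  end.

Definition mentions_empty_var (D : list ty) (t : term) : Prop :=
  (exists v, 1 <= occ_fv v t) \/
  (exists i e, 1 <= occ_bv i t /\ nth_error D i = Some e /\ empty_ty e = true).

Lemma mentions_empty_var_mono D u t :
  (forall v, occ_fv v u <= occ_fv v t) -> (forall i, occ_bv i u <= occ_bv i t) ->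
  mentions_empty_var D u -> mentions_empty_var D t.
Proof.
  intros Hf Hb [[v Hv]|[i [e [Hi He]]]].
  - left; exists v; specialize (Hf v); lia.
  - right; exists i, e; specialize (Hb i); split; [lia | exact He].
Qed.

Ltac mentions_from IH :=
  eapply mentions_empty_var_mono; cycle 2;
  [ apply IH; simpl;
    repeat match goal with H : empty_ty _ = _ |- _ => rewrite H end;
    rewrite ?orb_true_r; reflexivity
  | intro; simpl; lia .. ].

Lemma dtyped_empty_mentions_var D t T :
  dtyped D t T -> empty_ty T = true -> mentions_empty_var D t.
Proof.
  induction 1 as [D i a Hi|D x a|D c|D a b r Hb IHb _|D t s a r _ IHt _ IHs
    |D t s a r _ IHt _ IHs|D t a r _ IHt|D t a r _ IHt|D t s r a _ IHt _ IHs _ _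
    |D t s a r sg _ IHt _ IHs _ _|D t s a r _ _ _ _]; intros HE; simpl in HE.
  - right; exists i, a; simpl; rewrite Nat.eqb_refl; auto.
  - left; exists (x, a); cbn [occ_fv]; destruct (var_eq_dec (x, a) (x, a)); [lia | congruence].
  - destruct c; simpl in HE; try discriminate.
    destruct (empty_ty t), (empty_ty t0); discriminate.
  - apply andb_prop in HE as [Ha Hr].
    destruct (IHb Hr) as [[v Hv]|[[|i] [e [Hi [He He']]]]].
    + left; exists v; exact Hv.
    + injection He as <-; rewrite He' in Ha; discriminate.
    + right; exists i, e; auto.
  - destruct (empty_ty a) eqn:Ea.
    + mentions_from IHs.
    + mentions_from IHt.
  - apply orb_prop in HE as [HE|HE]; [mentions_from IHt | mentions_from IHs].
  - mentions_from IHt.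
  - mentions_from IHt.
  - mentions_from IHs.
  - destruct (IHs HE) as [[v Hv]|[[|[|i]] [e [Hi [He He']]]]].
    + left; exists v; simpl; lia.
    + injection He as <-; mentions_from IHt.
    + injection He as <-; mentions_from IHt.
    + right; exists i, e; simpl; split; [lia | auto].
  - destruct (empty_ty r); discriminate.
Qed.

Lemma dtyped_diamond_fv t : dtyped [] t TDiamond -> exists v, In v (fv t).
Proof.
  intros H.
  destruct (dtyped_empty_mentions_var _ _ _ H eq_refl) as [[v Hv]|[[|i] [e [_ [He _]]]]];
    try discriminate.
  exists v; apply In_fv_occ_fv; exact Hv.
Qed.

Lemma nfv_cons_lt a d x l T :
  dtyped [] (App (App (App (Const (CCons a)) d) x) l) T ->
  affine (App (App (App (Const (CCons a)) d) x) l) ->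
  nfv l < nfv (App (App (App (Const (CCons a)) d) x) l).
Proof.
  intros HT HA. apply dtyped_cons_inv in HT as [_ [Hd _]].
  destruct (dtyped_diamond_fv _ Hd) as [v Hv].
  apply (nfv_lt_incl v).
  - simpl; rewrite !in_app_iff; auto.
  - rewrite In_fv_occ_fv in *. specialize (HA v); simpl in HA; lia.
  - intros w Hw; simpl; rewrite !in_app_iff; auto.
Qed.

Lemma list_entries_App_inv x l p :
  list_entries (App x l) = Some p ->
  exists a d e n, x = App (App (Const (CCons a)) d) e /\
    list_entries l = Some (a, n) /\ p = (a, S n).
Proof.
  intros H.
  destruct x as [| | | | |x1 e|]; try discriminate.
  destruct x1 as [| | | | |c d|]; try discriminate.
  destruct c as [| |[| | |a|]| | | |]; try discriminate.
  simpl in H; destruct (list_entries l) as [[b n]|]; try discriminate.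
  destruct (ty_eq_dec a b) as [<-|]; try discriminate.
  injection H as <-; eauto 7.
Qed.

Lemma list_length_Some x n : list_length x = Some n -> exists b, list_entries x = Some (b, n).
Proof.
  unfold list_length; destruct (list_entries x) as [[b m]|]; intros H; inversion H; eauto.
Qed.

Lemma list_entries_le_nfv x b n T :
  list_entries x = Some (b, n) -> dtyped [] x T -> affine x -> n <= nfv x.
Proof.
  revert b n T; induction x; intros b k T Hx HT HA; try discriminate.
  - destruct c; try discriminate. injection Hx as _ <-; lia.
  - apply list_entries_App_inv in Hx as [a [d [e [n [-> [El Ep]]]]]].
    injection Ep as _ ->.
    pose proof (nfv_cons_lt _ _ _ _ _ HT HA).
    apply dtyped_cons_inv in HT as [_ [_ [_ Hl]]].
    pose proof (IHx2 a n (TList a) El Hl (proj2 (affine_App _ _ HA))). lia.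
Qed.

Lemma list_entries_open_rec x k s p :
  list_entries x = Some p -> list_entries (open_rec k s x) = Some p.
Proof.
  revert p; induction x; intros p H; try discriminate.
  - exact H.
  - apply list_entries_App_inv in H as [a [d [e [n [-> [El ->]]]]]].
    simpl; rewrite (IHx2 _ El); now destruct (ty_eq_dec a a).
Qed.

Lemma list_length_open_rec x k s n :
  list_length x = Some n -> list_length (open_rec k s x) = Some n.
Proof.
  intros H; apply list_length_Some in H as [b H].
  unfold list_length; now rewrite (list_entries_open_rec _ k s _ H).
Qed.

Lemma red_cons_prefix a d e y :
  red (App (App (Const (CCons a)) d) e) y ->
  exists d' e', y = App (App (Const (CCons a)) d') e'.
Proof.
  intros H; inversion H as [? ? Hc|? ? ? Hr|]; subst; eauto.
  - inversion Hc.
  - inversion Hr as [? ? Hc| ? ? ? Hr'|]; subst; eauto.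
    + inversion Hc.
    + apply red_App in Hr' as [? [? ?]]; discriminate.
Qed.

Lemma list_entries_red x x' p : red x x' -> list_entries x = Some p -> list_entries x' = Some p.
Proof.
  intros Hr; revert p; induction Hr as [t t' Hc|t t' s Hr _|t s s' _ IH]; intros p Hp.
  - destruct Hc; discriminate.
  - apply list_entries_App_inv in Hp as [a [d [e [n [-> [El ->]]]]]].
    apply red_cons_prefix in Hr as [d' [e' ->]].
    simpl; rewrite El; now destruct (ty_eq_dec a a).
  - apply list_entries_App_inv in Hp as [a [d [e [n [-> [El ->]]]]]].
    simpl; rewrite (IH _ El); now destruct (ty_eq_dec a a).
Qed.

Lemma list_length_red x x' n : red x x' -> list_length x = Some n -> list_length x' = Some n.
Proof.
  intros Hr H; apply list_length_Some in H as [b H].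
  unfold list_length; now rewrite (list_entries_red _ _ _ Hr H).
Qed.

Lemma list_length_cons a d x l n :
  list_length l = Some n ->
  forall n', list_length (App (App (App (Const (CCons a)) d) x) l) = Some n' -> n' = S n.
Proof.
  intros Hl n' H. apply list_length_Some in Hl as [b Hl].
  unfold list_length in H; simpl in H; rewrite Hl in H.
  destruct (ty_eq_dec a b); [injection H; auto | discriminate].
Qed.

Lemma list_length_lt_nfv_cons a d x l n T :
  list_length l = Some n ->
  dtyped [] (App (App (App (Const (CCons a)) d) x) l) T ->
  affine (App (App (App (Const (CCons a)) d) x) l) ->
  n < nfv (App (App (App (Const (CCons a)) d) x) l).
Proof.
  intros Hl HT HA.
  pose proof (nfv_cons_lt _ _ _ _ _ HT HA).
  apply dtyped_cons_inv in HT as [_ [_ [_ HT]]].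
  destruct (list_length_Some _ _ Hl) as [b Hb].
  pose proof (list_entries_le_nfv _ _ _ _ Hb HT (proj2 (affine_App _ _ HA))). lia.
Qed.

(** * The measure [pi + len] *)

Lemma brace_dec (b : term) : (exists h, b = Brace h) \/ (forall h, b <> Brace h).
Proof. destruct b; eauto; right; discriminate. Qed.

Lemma pi_App_le a b m : pi (App a b) m <= pi a m + pi b m.
Proof.
  destruct b; simpl; try lia.
  destruct (list_length a); [|lia].
  pose proof (Nat.le_min_r n m). nia.
Qed.

Lemma pi_App_nobrace a b m : (forall h, b <> Brace h) -> pi (App a b) m = pi a m + pi b m.
Proof. intros H; destruct b; auto. now destruct (H b). Qed.

Lemma pi_App_nolist a b m : list_length a = None -> pi (App a b) m = pi a m + pi b m.
Proof. intros H; destruct b; simpl; auto. now rewrite H. Qed.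

Lemma pi_App_list a h m n :
  list_length a = Some n ->
  pi (App a (Brace h)) m = pi a m + Nat.min n m * pi h m + Nat.min n m * len h.
Proof. intros H; simpl; now rewrite H. Qed.

Lemma pi_App_l_le t t' s m :
  (forall n, list_length t = Some n -> list_length t' = Some n) ->
  pi (App t' s) m + pi t m <= pi (App t s) m + pi t' m.
Proof.
  intros Hl. destruct (list_length t) as [n|] eqn:E.
  - destruct s; simpl; rewrite ?E, ?(Hl n eq_refl); lia.
  - rewrite (pi_App_nolist t s m E). pose proof (pi_App_le t' s m). lia.
Qed.

Lemma pi_open_rec_le b k s m :
  occ_bv k b <= 1 -> pi (open_rec k s b) m <= pi b m + occ_bv k b * pi s m.
Proof.
  revert k; induction b as [n| | |a b IH|b1 IH1 b2 IH2|b1 IH1 b2 IH2|h IH]; intros k Hk;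
    simpl in Hk; try (simpl; lia).
  - simpl; destruct (Nat.eqb n k); simpl; lia.
  - exact (IH _ Hk).
  - specialize (IH1 k ltac:(lia)); specialize (IH2 k ltac:(lia)). simpl; nia.
  - specialize (IH1 k ltac:(lia)). cbn [open_rec occ_bv].
    destruct (brace_dec b2) as [[h ->]|Hb2].
    + cbn [occ_bv] in *. rewrite (open_rec_no_occ (Brace h)) by (simpl; lia).
      destruct (list_length b1) as [n|] eqn:E.
      * rewrite (pi_App_list _ _ _ _ E).
        rewrite (pi_App_list _ _ _ _ (list_length_open_rec _ k s _ E)). nia.
      * rewrite (pi_App_nolist _ _ _ E).
        pose proof (pi_App_le (open_rec k s b1) (Brace h) m). nia.
    + specialize (IH2 k ltac:(lia)).
      rewrite (pi_App_nobrace _ _ _ Hb2), Nat.mul_add_distr_r.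
      pose proof (pi_App_le (open_rec k s b1) (open_rec k s b2) m). lia.
  - rewrite open_rec_no_occ by (simpl; lia). lia.
Qed.

Lemma len_open_rec_le b k s : len (open_rec k s b) <= len b + occ_bv k b * len s.
Proof.
  revert k; induction b; intros k; simpl; try lia.
  - destruct (Nat.eqb n k); simpl; lia.
  - specialize (IHb (S k)); lia.
  - specialize (IHb1 k); specialize (IHb2 k); nia.
  - specialize (IHb1 k); specialize (IHb2 k); nia.
Qed.

Lemma pi_brace_ge x h m k :
  k <= m -> (forall n, list_length x = Some n -> k <= n) ->
  pi x m + k * (pi h m + len h) <= pi (App x (Brace h)) m.
Proof.
  intros Hm Hn. simpl. destruct (list_length x) as [n|].
  - pose proof (Nat.min_glb _ _ _ (Hn n eq_refl) Hm). nia.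
  - nia.
Qed.

Lemma pi_len_beta a b s m :
  occ_bv 0 b <= 1 ->
  pi (open b s) m + len (open b s) < pi (App (Lam a b) s) m + len (App (Lam a b) s).
Proof.
  intros Hb. unfold open. rewrite (pi_App_nolist (Lam a b) s m eq_refl).
  pose proof (pi_open_rec_le b 0 s m Hb). pose proof (len_open_rec_le b 0 s).
  simpl; nia.
Qed.

Lemma pi_len_tens a r t s b m :
  locally_closed t -> occ_bv 0 b <= 1 -> occ_bv 1 b <= 1 ->
  pi (open2 b t s) m + len (open2 b t s) <
  pi (App (App (App (Const (CTens a r)) t) s) (Lam a (Lam r b))) m +
  len (App (App (App (Const (CTens a r)) t) s) (Lam a (Lam r b))).
Proof.
  intros Ht Hb0 Hb1. rewrite open2_locally_closed by exact Ht.
  assert (E : occ_bv 0 (open_rec 1 t b) = occ_bv 0 b) by (apply occ_bv_open_rec_neq; auto).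
  pose proof (pi_open_rec_le (open_rec 1 t b) 0 s m ltac:(lia)).
  pose proof (pi_open_rec_le b 1 t m Hb1).
  pose proof (len_open_rec_le (open_rec 1 t b) 0 s). pose proof (len_open_rec_le b 1 t).
  rewrite E in *.
  rewrite (pi_App_nobrace _ (Lam a (Lam r b))) by discriminate.
  rewrite (pi_App_nolist (App (Const (CTens a r)) t) s m eq_refl),
    (pi_App_nolist (Const (CTens a r)) t m eq_refl).
  simpl; nia.
Qed.

Lemma pi_len_cons a d x l h s n m :
  list_length l = Some n -> n < m ->
  pi (App (App (App h d) x) (App (App l (Brace h)) s)) m +
  len (App (App (App h d) x) (App (App l (Brace h)) s)) <
  pi (App (App (App (App (App (Const (CCons a)) d) x) l) (Brace h)) s) m +
  len (App (App (App (App (App (Const (CCons a)) d) x) l) (Brace h)) s).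
Proof.
  intros Hl Hn.
  (* The redex charges [S n] copies of [h], the reduct only [n] besides the one it applies. *)
  pose proof (pi_brace_ge (App (App (App (Const (CCons a)) d) x) l) h m (S n) ltac:(lia)
    (fun n' H => ltac:(rewrite (list_length_cons _ _ _ _ _ Hl n' H); lia))).
  rewrite
    (pi_App_nolist (App (App (App (App (Const (CCons a)) d) x) l) (Brace h)) s m eq_refl),
    (pi_App_nolist (App (App (Const (CCons a)) d) x) l m eq_refl),
    (pi_App_nolist (App (Const (CCons a)) d) x m eq_refl),
    (pi_App_nolist (Const (CCons a)) d m eq_refl) in *.
  rewrite (pi_App_nobrace _ (App _ s)) by discriminate.
  pose proof (pi_App_le (App l (Brace h)) s m).
  pose proof (pi_App_le (App h d) x m). pose proof (pi_App_le h d m).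
  rewrite (pi_App_list _ _ _ _ Hl), Nat.min_l in * by lia.
  simpl in *; nia.
Qed.

Lemma conv_decrease t t' T N :
  conv t t' -> dtyped [] t T -> affine t -> nfv t <= N -> pi t' N + len t' < pi t N + len t.
Proof.
  intros Hc HT HA HN.
  destruct Hc as [a b s|t s|t s|t s|t s|a r t s b|a t s|a d x l t s Hl]; try (simpl; lia).
  - apply dtyped_beta_inv in HT as [_ [Hb _]]. exact (pi_len_beta a b s N Hb).
  - apply dtyped_tens_redex_inv in HT as [Ht [_ [_ [Hb0 Hb1]]]].
    exact (pi_len_tens a r t s b N (dtyped_locally_closed _ _ Ht) Hb0 Hb1).
  - rewrite (pi_App_nolist (App (Const (CNil a)) (Brace t)) s N eq_refl); simpl; lia.
  - destruct (list_length l) as [n|] eqn:En; [|congruence].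
    apply pi_len_cons with (n := n); auto.
    apply dtyped_iter_app_inv in HT as [a' [Hcons _]].
    apply affine_App in HA as [HA _]; apply affine_App in HA as [HA _].
    pose proof (list_length_lt_nfv_cons _ _ _ _ _ _ En Hcons HA).
    pose proof (nfv_App (App (App (App (App (Const (CCons a)) d) x) l) (Brace t)) s).
    pose proof (nfv_App (App (App (App (Const (CCons a)) d) x) l) (Brace t)).
    lia.
Qed.

Lemma red_decrease t t' T N :
  red t t' -> dtyped [] t T -> affine t -> nfv t <= N -> pi t' N + len t' < pi t N + len t.
Proof.
  intros Hr; revert T; induction Hr as [t t' Hc|t t' s Hr IH|t s s' Hr IH]; intros T HT HA HN.
  - exact (conv_decrease _ _ _ _ Hc HT HA HN).
  - destruct (dtyped_App_l _ _ _ _ HT) as [T' HT'].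
    apply affine_App in HA as [HA _].
    specialize (IH T' HT' HA ltac:(pose proof (nfv_App t s); lia)).
    pose proof (pi_App_l_le t t' s N (fun n => list_length_red _ _ n Hr)).
    cbn [len]; lia.
  - destruct (red_App _ _ Hr) as [u [v ->]].
    destruct (dtyped_App_App_r _ _ _ _ _ HT) as [T' HT'].
    apply affine_App in HA as [_ HA].
    specialize (IH T' HT' HA ltac:(pose proof (nfv_App t (App u v)); lia)).
    rewrite (pi_App_nobrace t (App u v)) by discriminate.
    pose proof (pi_App_le t s' N). simpl in *; lia.
Qed.

(** * From [typed] to [dtyped] *)

Lemma In_fv_open_rec t k s v : In v (fv t) -> In v (fv (open_rec k s t)).
Proof. rewrite !In_fv_occ_fv. pose proof (occ_fv_open_rec_ge t k s v). lia. Qed.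

Lemma In_fv_open2_rec t k u s v : In v (fv t) -> In v (fv (open2_rec k u s t)).
Proof. rewrite !In_fv_occ_fv. pose proof (occ_fv_open2_rec_ge t k u s v). lia. Qed.

Lemma fv_incl_open2_fresh s x a y r G G' :
  (forall v, In v G' <-> In v G \/ v = (x, a) \/ v = (y, r)) ->
  ~ In (x, a) (fv s) -> ~ In (y, r) (fv s) ->
  incl (fv (open2 s (FVar x a) (FVar y r))) G' -> incl (fv s) G.
Proof.
  intros HG Hx Hy H v Hv.
  destruct (proj1 (HG v) (H v (In_fv_open2_rec _ _ _ _ _ Hv))) as [Hin | [-> | ->]]; tauto.
Qed.

Lemma typed_fv_incl G t T : typed G t T -> incl (fv t) G.
Proof.
  induction 1 as [G x a Hin|G c|G G' a r b x Hx HG' _ IHb|G G1 G2 t s a r _ IHt _ IHs _ HU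
    |G t s a r _ IHt _ IHs|G t a r _ IHt|G t a r _ IHt|G G1 G2 t s r a _ IHt _ IHs _ IHr _ HU
    |G G1 G2 G2' t s a r sg x y _ IHt Hx Hy _ _ _ HG2' _ IHs _ HU|G t s a r _ IHt _ IHs];
    intros v Hv; simpl in Hv; rewrite ?in_app_iff in Hv.
  - destruct Hv as [<-|[]]; exact Hin.
  - destruct Hv.
  - destruct (proj1 (HG' v) (IHb v (In_fv_open_rec _ _ _ _ Hv))) as [Hin | ->]; tauto.
  - apply HU; destruct Hv; auto.
  - destruct Hv; auto.
  - destruct Hv as [|[]]; auto.
  - destruct Hv as [|[]]; auto.
  - apply HU; rewrite ?in_app_iff in Hv; destruct Hv as [|[|]]; auto.
  - apply HU; destruct Hv; [left | right; eapply fv_incl_open2_fresh]; eauto.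
  - destruct Hv as [|Hv]; auto. destruct (IHs v Hv).
Qed.

Lemma occ_fv_disjoint G1 G2 t s v :
  ctx_disjoint G1 G2 -> incl (fv t) G1 -> incl (fv s) G2 -> occ_fv v t = 0 \/ occ_fv v s = 0.
Proof.
  intros HD Ht Hs.
  destruct (occ_fv v t) eqn:E1; auto. destruct (occ_fv v s) eqn:E2; auto.
  exfalso; apply (HD v); [apply Ht | apply Hs]; apply In_fv_occ_fv; lia.
Qed.

Lemma typed_affine G t T : typed G t T -> affine t.
Proof.
  induction 1 as [G x a|G c|G G' a r b x _ _ _ IHb|G G1 G2 t s a r Ht IHt Hs IHs HD _
    |G t s a r _ IHt _ IHs|G t a r _ IHt|G t a r _ IHt|G G1 G2 t s r a Ht IHt Hs IHs Hr IHr HD _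
    |G G1 G2 G2' t s a r sg x y Ht IHt Hx Hy _ _ _ HG2' Hs IHs HD _|G t s a r _ IHt Hs _];
    intros v; simpl.
  - destruct (var_eq_dec v (x, a)); lia.
  - lia.
  - pose proof (occ_fv_open_rec_ge b 0 (FVar x a) v). specialize (IHb v).
    unfold open in *; lia.
  - specialize (IHt v); specialize (IHs v).
    destruct (occ_fv_disjoint _ _ t s v HD (typed_fv_incl _ _ _ Ht) (typed_fv_incl _ _ _ Hs));
      lia.
  - specialize (IHt v); specialize (IHs v); lia.
  - specialize (IHt v); lia.
  - specialize (IHt v); lia.
  - specialize (IHt v); specialize (IHs v); specialize (IHr v).
    destruct (occ_fv_disjoint _ _ t s v HD (typed_fv_incl _ _ _ Ht) (typed_fv_incl _ _ _ Hs));
    destruct (occ_fv_disjoint _ _ t r v HD (typed_fv_incl _ _ _ Ht) (typed_fv_incl _ _ _ Hr));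
      lia.
  - specialize (IHt v); specialize (IHs v).
    pose proof (occ_fv_open2_rec_ge s 0 (FVar x a) (FVar y r) v). unfold open2 in *.
    destruct (occ_fv_disjoint _ _ t s v HD (typed_fv_incl _ _ _ Ht)
      (fv_incl_open2_fresh _ _ _ _ _ _ _ HG2' Hx Hy (typed_fv_incl _ _ _ Hs))); lia.
  - specialize (IHt v).
    destruct (occ_fv v s) eqn:E; [lia|].
    destruct (typed_fv_incl _ _ _ Hs v); apply In_fv_occ_fv; lia.
Qed.

(* Inverse of the openings performed by the binding rules of [typed]. *)
Fixpoint opn (k : nat) (sg : list var) (t : term) : term :=
  match t with
  | BVar i =>
      if Nat.leb k i then
        match nth_error sg (i - k) with Some (x, a) => FVar x a | None => BVar i end
      else BVar i
  | FVar _ _ => t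
  | Const _ => t
  | Lam a b => Lam a (opn (S k) sg b)
  | Pair a b => Pair (opn k sg a) (opn k sg b)
  | App a b => App (opn k sg a) (opn k sg b)
  | Brace b => Brace (opn k sg b)
  end.

Lemma open_rec_opn t k sg x a :
  open_rec k (FVar x a) (opn (S k) sg t) = opn k ((x, a) :: sg) t.
Proof.
  revert k; induction t; intros k; cbn [opn open_rec]; f_equal; auto.
  destruct (Nat.lt_trichotomy n k) as [Hl|[->|Hl]].
  - rewrite (proj2 (Nat.leb_gt _ _)), (proj2 (Nat.leb_gt k n)) by lia.
    simpl; now rewrite (proj2 (Nat.eqb_neq n k)) by lia.
  - rewrite (proj2 (Nat.leb_gt _ _)), Nat.leb_refl, Nat.sub_diag by lia.
    simpl; now rewrite Nat.eqb_refl.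
  - rewrite (proj2 (Nat.leb_le (S k) n)), (proj2 (Nat.leb_le k n)) by lia.
    replace (n - k) with (S (n - S k)) by lia; simpl.
    destruct (nth_error sg (n - S k)) as [[y b]|]; simpl; auto.
    now rewrite (proj2 (Nat.eqb_neq n k)) by lia.
Qed.

Lemma open2_opn t sg x a y r :
  open2 (opn 2 sg t) (FVar x a) (FVar y r) = opn 0 ((y, r) :: (x, a) :: sg) t.
Proof.
  unfold open2; rewrite open2_rec_open_rec by (intro; reflexivity).
  now rewrite !open_rec_opn.
Qed.

Lemma occ_bv_opn t k sg i : i < k -> occ_bv i (opn k sg t) = occ_bv i t.
Proof.
  revert k i; induction t; intros k i Hi; simpl; auto with arith.
  destruct (Nat.leb_spec k n); auto.
  destruct (nth_error sg (n - k)) as [[y b]|]; simpl; auto.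
  now rewrite (proj2 (Nat.eqb_neq n i)) by lia.
Qed.

Lemma opn_nil t k : opn k [] t = t.
Proof.
  revert k; induction t; intros k; simpl; f_equal; auto.
  destruct (Nat.leb k n); auto. now destruct (n - k).
Qed.

Lemma opn_closed t k sg : fv (opn k sg t) = [] -> opn k sg t = t.
Proof.
  revert k; induction t; intros k H; simpl in *; auto.
  - destruct (Nat.leb k n); auto.
    destruct (nth_error sg (n - k)) as [[y b]|]; simpl in H; auto; discriminate.
  - now rewrite IHt.
  - apply app_eq_nil in H as [H1 H2]. now rewrite IHt1, IHt2.
  - apply app_eq_nil in H as [H1 H2]. now rewrite IHt1, IHt2.
  - now rewrite IHt.
Qed.

Lemma opn_BVar_shape k sg i u :
  opn k sg (BVar i) = u -> u = BVar i \/ exists x a, u = FVar x a.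
Proof.
  intros <-; simpl; destruct (Nat.leb k i); auto.
  destruct (nth_error sg (i - k)) as [[x a]|]; eauto.
Qed.

Ltac opn_inv_BVar H :=
  destruct (opn_BVar_shape _ _ _ _ H) as [E | (? & ? & E)]; discriminate E.

Lemma opn_inv_FVar t k sg x a :
  opn k sg t = FVar x a ->
  t = FVar x a \/ exists i, t = BVar i /\ k <= i /\ nth_error sg (i - k) = Some (x, a).
Proof.
  intros H; destruct t; simpl in H; try discriminate; auto.
  right; exists n; destruct (Nat.leb_spec k n); [|discriminate].
  destruct (nth_error sg (n - k)) as [[y b]|]; now inversion H.
Qed.

Lemma opn_inv_Const t k sg c : opn k sg t = Const c -> t = Const c.
Proof. intros H; destruct t; try discriminate H; auto. opn_inv_BVar H. Qed.

Lemma opn_inv_Lam t k sg a b :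
  opn k sg t = Lam a b -> exists b', t = Lam a b' /\ b = opn (S k) sg b'.
Proof.
  intros H; destruct t; try discriminate H; [opn_inv_BVar H|].
  injection H as <- <-; eauto.
Qed.

Lemma opn_inv_Pair t k sg u v :
  opn k sg t = Pair u v -> exists u' v', t = Pair u' v' /\ u = opn k sg u' /\ v = opn k sg v'.
Proof.
  intros H; destruct t; try discriminate H; [opn_inv_BVar H|].
  injection H as <- <-; eauto.
Qed.

Lemma opn_inv_App t k sg u v :
  opn k sg t = App u v -> exists u' v', t = App u' v' /\ u = opn k sg u' /\ v = opn k sg v'.
Proof.
  intros H; destruct t; try discriminate H; [opn_inv_BVar H|].
  injection H as <- <-; eauto.
Qed.

Lemma opn_inv_Brace t k sg b :
  opn k sg t = Brace b -> exists b', t = Brace b' /\ b = opn k sg b'.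
Proof.
  intros H; destruct t; try discriminate H; [opn_inv_BVar H|].
  injection H as <-; eauto.
Qed.

Lemma occ_bv_open2_fresh s x a y r :
  ~ In (x, a) (fv s) -> ~ In (y, r) (fv s) -> (x, a) <> (y, r) ->
  affine (open2 s (FVar x a) (FVar y r)) -> occ_bv 0 s <= 1 /\ occ_bv 1 s <= 1.
Proof.
  intros Hx Hy Hxy HA.
  unfold open2 in HA; rewrite open2_rec_open_rec in HA by (intro; reflexivity).
  assert (Hyx : occ_fv (y, r) (FVar x a) = 0)
    by (cbn [occ_fv]; destruct (var_eq_dec (y, r) (x, a)); congruence).
  assert (Hxy' : occ_fv (x, a) (FVar y r) = 0)
    by (cbn [occ_fv]; destruct (var_eq_dec (x, a) (y, r)); congruence).
  assert (Hy' : ~ In (y, r) (fv (open_rec 1 (FVar x a) s))).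
  { rewrite In_fv_occ_fv, occ_fv_open_rec_other, <- In_fv_occ_fv; auto. }
  split.
  - pose proof (HA (y, r)) as H.
    rewrite occ_fv_open_rec_fresh, occ_bv_open_rec_neq in H; auto.
    intro; reflexivity.
  - pose proof (HA (x, a)) as H.
    rewrite occ_fv_open_rec_other, occ_fv_open_rec_fresh in H; auto.
Qed.

Lemma typed_dtyped_opn G u T :
  typed G u T -> forall sg t, opn 0 sg t = u -> dtyped (map snd sg) t T.
Proof.
  induction 1 as [G x a|G c|G G' a r b x Hx _ Hb IHb|G G1 G2 t s a r _ IHt _ IHs _ _
    |G t s a r _ IHt _ IHs|G t a r _ IHt|G t a r _ IHt|G G1 G2 t s r a _ IHt _ IHs _ IHr _ _
    |G G1 G2 G2' t s a r sg x y _ IHt Hx Hy _ _ Hxy _ Hs IHs _ _|G t s a r _ IHt Hs IHs];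
    intros sgm t0 E.
  - apply opn_inv_FVar in E as [->|[i [-> [_ Ei]]]]; constructor.
    rewrite Nat.sub_0_r in Ei; rewrite nth_error_map; unfold var in *; now rewrite Ei.
  - apply opn_inv_Const in E as ->; constructor.
  - apply opn_inv_Lam in E as [b' [-> ->]]. constructor.
    + apply (IHb ((x, a) :: sgm)). symmetry; apply open_rec_opn.
    + rewrite <- (occ_bv_opn b' 1 sgm 0), <- (occ_fv_open_rec_fresh _ 0 x a) by auto.
      exact (typed_affine _ _ _ Hb (x, a)).
  - apply opn_inv_App in E as [t' [s' [-> [-> ->]]]]; eapply D_App; eauto.
  - apply opn_inv_Pair in E as [t' [s' [-> [-> ->]]]]; eapply D_Pair; eauto.
  - apply opn_inv_App in E as [t' [c [-> [-> E]]]].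
    apply eq_sym, opn_inv_Const in E as ->; eapply D_Fst; eauto.
  - apply opn_inv_App in E as [t' [c [-> [-> E]]]].
    apply eq_sym, opn_inv_Const in E as ->; eapply D_Snd; eauto.
  - apply opn_inv_App in E as [t' [p [-> [-> E]]]].
    apply eq_sym, opn_inv_Pair in E as [s' [r' [-> [-> ->]]]]; eapply D_If; eauto.
  - apply opn_inv_App in E as [t' [l [-> [-> E]]]].
    apply eq_sym, opn_inv_Lam in E as [l' [-> E]].
    apply eq_sym, opn_inv_Lam in E as [s' [-> ->]].
    destruct (occ_bv_open2_fresh _ _ _ _ _ Hx Hy Hxy (typed_affine _ _ _ Hs)).
    eapply D_TensE; eauto.
    + apply (IHs ((y, r) :: (x, a) :: sgm)). symmetry; apply open2_opn.
    + rewrite <- (occ_bv_opn s' 2 sgm 0); auto.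
    + rewrite <- (occ_bv_opn s' 2 sgm 1); auto.
  - apply opn_inv_App in E as [t' [h [-> [-> E]]]].
    apply eq_sym, opn_inv_Brace in E as [s' [-> ->]].
    assert (Hc : fv (opn 0 sgm s') = []).
    { destruct (fv (opn 0 sgm s')) as [|w l] eqn:Ew; auto.
      destruct (typed_fv_incl _ _ _ Hs w); rewrite Ew; now left. }
    rewrite (opn_closed _ _ _ Hc) in *.
    eapply D_ListE; eauto. apply (IHs []), opn_nil.
Qed.

Lemma typed_dtyped G t T : typed G t T -> dtyped [] t T.
Proof. intros H; apply (typed_dtyped_opn _ _ _ H []), opn_nil. Qed.

Lemma reduction_sequence_bound k ts T N :
  dtyped [] (ts 0) T -> affine (ts 0) -> nfv (ts 0) <= N ->
  (forall i, i < k -> red (ts i) (ts (S i))) ->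
  k + pi (ts k) N + len (ts k) <= pi (ts 0) N + len (ts 0).
Proof.
  revert ts; induction k as [|k IH]; intros ts HT HA HN Hred; [lia|].
  assert (Hr : red (ts 0) (ts 1)) by (apply Hred; lia).
  pose proof (red_decrease _ _ _ _ Hr HT HA HN).
  pose proof (nfv_red_le _ _ _ Hr HT HA).
  specialize (IH (fun i => ts (S i)) (dtyped_red _ _ _ Hr HT) (affine_red _ _ _ Hr HT HA)
    ltac:(lia) (fun i Hi => Hred (S i) ltac:(lia))).
  simpl in IH; lia.
Qed.

Theorem theorem4p8 (G : ctx) (t : term) (tau : ty) :
  typed G t tau ->
  (forall (N : nat) (t' : term),
      nfv t <= N -> red t t' -> pi t N + len t > pi t' N + len t')
  /\
  (forall (k : nat) (ts : nat -> term),
      ts 0 = t -> (forall i, i < k -> red (ts i) (ts (S i))) ->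
      k <= pi t (nfv t) + len t).
Proof.
  intros Ht.
  pose proof (typed_dtyped _ _ _ Ht) as HT.
  pose proof (typed_affine _ _ _ Ht) as HA.
  split.
  - intros N t' HN Hr. exact (red_decrease _ _ _ _ Hr HT HA HN).
  - intros k ts <- Hred.
    pose proof (reduction_sequence_bound k ts _ _ HT HA (le_n _) Hred). lia.
Qed.
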